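(* For $\alpha>0$ and $\lambda>0$ let $\psi(\alpha,\lambda)=e^{-\alpha\lambda}\sum_{k=0}^{\infty}\left(\frac{\lambda^k}{k!}\right)^{\alpha}$. Then for every $0<\alpha<1$ the function $\lambda\mapsto\psi(\alpha,\lambda)$ is strictly increasing on $(0,+\infty)$, while for every $\alpha>1$ the function $\lambda\mapsto\psi(\alpha,\lambda)$ is strictly decreasing on $(0,+\infty)$. Consequently, for every $\alpha>0$, $\alpha\ne1$, the R\'enyi entropy $H_R^{\alpha}(\lambda)=\frac{1}{1-\alpha}\log\psi(\alpha,\lambda)$ of the Poisson distribution with parameter $\lambda$ is strictly increasing in $\lambda\in(0,+\infty)$.
   Context: $\psi(\alpha,\lambda)=\sum_{k\ge0}p_k(\lambda)^\alpha$ where $p_k(\lambda)=\frac{\lambda^k}{k!}e^{-\lambda}$ are the Poisson probabilities. The R\'enyi entropy of order $\alpha>0,\alpha\ne1$, of a discrete distribution $(p_i)$ is $\frac{1}{1-\alpha}\log\sum_i p_i^\alpha$. *)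

From Stdlib Require Import Reals.
From Coquelicot Require Import Coquelicot.
Open Scope R_scope.

Definition poisson_p (lambda : R) (k : nat) : R :=
  lambda ^ k / INR (Factorial.fact k) * exp (- lambda).

Definition psi (alpha lambda : R) : R :=
  exp (- alpha * lambda) *
  Series (fun k : nat => Rpower (lambda ^ k / INR (Factorial.fact k)) alpha).

Definition renyi_entropy (alpha : R) (p : nat -> R) : R :=
  / (1 - alpha) * ln (Series (fun i : nat => Rpower (p i) alpha)).

Definition poisson_renyi (alpha lambda : R) : R :=
  renyi_entropy alpha (poisson_p lambda).

Definition strictly_increasing_pos (f : R -> R) : Prop :=
  forall x y : R, 0 < x -> x < y -> f x < f y.

Definition strictly_decreasing_pos (f : R -> R) : Prop :=
  forall x y : R, 0 < x -> x < y -> f y < f x.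

From Stdlib Require Import Reals Lra Lia.
From Coquelicot Require Import Coquelicot.
Open Scope R_scope.

(* Write b_k = (lambda^k / k!)^alpha, S = sum_k b_k and M = sum_k k b_k, so that
   psi = e^{-alpha lambda} S and psi' = alpha e^{-alpha lambda} / lambda * (M - lambda S).
   With r = lambda / (k+1) one has b_{k+1} = r^alpha b_k, and the Bernoulli inequality
   r^{1-alpha} <= 1 + (1-alpha)(r-1) (reversed when alpha > 1) turns into the termwise bound
   alpha (k+1) b_{k+1} + lambda (1-alpha) b_{k+1} >= lambda b_k.  Summing over k gives
   alpha (M - lambda S) >= lambda (1-alpha) > 0 for alpha < 1, and the reverse inequality,
   with right-hand side < 0, for alpha > 1.  The Renyi entropy is ln psi / (1 - alpha). *)

Lemma Rpower_pos (x y : R) : 0 < Rpower x y.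
Proof. apply exp_pos. Qed.

Lemma Rpower_Rinv (x y : R) : 0 < x -> Rpower (/ x) y = / Rpower x y.
Proof.
  intros Hx. unfold Rpower. rewrite ln_Rinv, <- exp_Ropp by exact Hx.
  f_equal. ring.
Qed.

Lemma Rpower_pow_l (x y : R) (n : nat) : 0 < x -> Rpower (x ^ n) y = Rpower x y ^ n.
Proof.
  intros Hx. rewrite <- Rpower_pow, Rpower_mult, <- Rpower_pow by (auto; apply Rpower_pos).
  rewrite Rpower_mult, Rmult_comm. reflexivity.
Qed.

Lemma exp_ge_tangent (m a : R) : exp m * (1 + (a - m)) <= exp a.
Proof.
  replace (exp a) with (exp m * exp (a - m)) by (rewrite <- exp_plus; f_equal; ring).
  apply Rmult_le_compat_l; [left; apply exp_pos | apply exp_ineq1_le].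
Qed.

Lemma Rpower_le_Bernoulli (x t : R) : 0 < x -> 0 <= t <= 1 ->
  Rpower x t <= 1 + t * (x - 1).
Proof.
  intros Hx Ht. unfold Rpower. rewrite <- (exp_ln x) at 2 by exact Hx.
  set (m := t * ln x).
  pose proof (exp_ge_tangent m (ln x)) as Hy.
  pose proof (exp_ge_tangent m 0) as H0. rewrite exp_0 in H0.
  assert (Hm : exp m = t * (exp m * (1 + (ln x - m))) + (1 - t) * (exp m * (1 + (0 - m))))
    by (unfold m; ring).
  assert (t * (exp m * (1 + (ln x - m))) <= t * exp (ln x))
    by (apply Rmult_le_compat_l; lra).
  assert ((1 - t) * (exp m * (1 + (0 - m))) <= (1 - t) * 1)
    by (apply Rmult_le_compat_l; lra).
  lra.
Qed.

Lemma Rpower_ge_Bernoulli (x t : R) : 0 < x -> t <= 0 ->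
  1 + t * (x - 1) <= Rpower x t.
Proof.
  intros Hx Ht. unfold Rpower. rewrite <- (exp_ln x) at 1 by exact Hx.
  pose proof (exp_ineq1_le (t * ln x)). pose proof (exp_ineq1_le (ln x)).
  nra.
Qed.

Lemma Series_nonneg (a : nat -> R) : (forall n, 0 <= a n) -> ex_series a -> 0 <= Series a.
Proof.
  intros Ha Hex. rewrite <- (Rmult_0_l (Series a)), <- Series_scal_l.
  apply Series_le; [intros n; rewrite Rmult_0_l; split; [lra | apply Ha] | exact Hex].
Qed.

Section Psi.

Variable alpha : R.
Hypothesis alpha_pos : 0 < alpha.

Definition psi_term (lambda : R) (n : nat) : R :=
  Rpower (lambda ^ n / INR (Factorial.fact n)) alpha.

Definition psi_coef (n : nat) : R := Rpower (INR (Factorial.fact n)) (- alpha).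

Lemma psi_termE (lambda : R) (n : nat) : 0 < lambda ->
  psi_term lambda n = psi_coef n * Rpower lambda alpha ^ n.
Proof.
  intros Hl. unfold psi_term, psi_coef, Rdiv.
  rewrite <- Rpower_mult_distr, Rpower_Rinv, Rpower_Ropp, Rpower_pow_l;
    auto using pow_lt, INR_fact_lt_0, Rinv_0_lt_compat.
  ring.
Qed.

Lemma psi_term0 (lambda : R) : psi_term lambda 0 = 1.
Proof. unfold psi_term, Rpower. simpl. rewrite Rdiv_1_r, ln_1, Rmult_0_r. apply exp_0. Qed.

Lemma psi_termS (lambda : R) (n : nat) : 0 < lambda ->
  psi_term lambda (S n) = psi_term lambda n * Rpower (lambda / INR (S n)) alpha.
Proof.
  intros Hl. pose proof (INR_fact_lt_0 n). pose proof (lt_0_INR (S n) (Nat.lt_0_succ n)).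
  unfold psi_term. rewrite Rpower_mult_distr by (apply Rdiv_lt_0_compat; auto using pow_lt).
  f_equal. rewrite fact_simpl, mult_INR, <- tech_pow_Rmult. field. lra.
Qed.

Lemma psi_coef_ratio (n : nat) : psi_coef (S n) / psi_coef n = Rpower (INR (S n)) (- alpha).
Proof.
  unfold psi_coef.
  rewrite fact_simpl, mult_INR, <- Rpower_mult_distr
    by (apply INR_fact_lt_0 || apply lt_0_INR; lia).
  field. apply Rgt_not_eq, Rpower_pos.
Qed.

Lemma CV_radius_psi_coef : CV_radius psi_coef = p_infty.
Proof.
  apply CV_radius_infinite_DAlembert; [intros n; apply Rgt_not_eq, Rpower_pos |].
  apply is_lim_seq_ext with (fun n => exp (- alpha * ln (INR (S n)))).
  { intros n. rewrite psi_coef_ratio, Rabs_pos_eq by (left; apply Rpower_pos). reflexivity. }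
  apply is_lim_comp_seq with m_infty; [apply is_lim_exp_m | exists 0%nat; easy |].
  replace m_infty with (Rbar_mult (- alpha) p_infty)
    by (simpl; destruct Rle_dec; [exfalso; lra | reflexivity]).
  apply is_lim_seq_scal_l.
  apply is_lim_comp_seq with p_infty; [apply is_lim_ln_p | exists 0%nat; easy |].
  apply (is_lim_seq_incr_1 INR p_infty), is_lim_seq_INR.
Qed.

Lemma Rpower_lt_CV_radius_psi_coef (lambda : R) :
  Rbar_lt (Rabs (Rpower lambda alpha)) (CV_radius psi_coef).
Proof. rewrite CV_radius_psi_coef. exact I. Qed.

Lemma ex_series_psi_term (lambda : R) : 0 < lambda -> ex_series (psi_term lambda).
Proof.
  intros Hl. apply ex_series_ext with (fun n => psi_coef n * Rpower lambda alpha ^ n).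
  { intros n. symmetry. apply psi_termE, Hl. }
  apply ex_pseries_R, CV_radius_inside, Rpower_lt_CV_radius_psi_coef.
Qed.

Lemma Series_psi_term_incr_1 (lambda : R) : 0 < lambda ->
  Series (psi_term lambda) = 1 + Series (fun n => psi_term lambda (S n)).
Proof.
  intros Hl. rewrite Series_incr_1, psi_term0 by apply ex_series_psi_term, Hl. reflexivity.
Qed.

Lemma Series_psi_term_gt0 (lambda : R) : 0 < lambda -> 0 < Series (psi_term lambda).
Proof.
  intros Hl. rewrite Series_psi_term_incr_1 by exact Hl.
  enough (0 <= Series (fun n => psi_term lambda (S n))) by lra.
  apply Series_nonneg; [intros n; left; apply Rpower_pos |].
  apply (ex_series_incr_1 (psi_term lambda)), ex_series_psi_term, Hl.
Qed.

(* [lambda * d/dlambda b_k = alpha * k * b_k]; the sum is reindexed from k = 1. *)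
Definition psi_moment_term (lambda : R) (n : nat) : R := INR (S n) * psi_term lambda (S n).

Lemma psi_moment_termE (lambda : R) (n : nat) : 0 < lambda ->
  psi_moment_term lambda n
  = PS_derive psi_coef n * Rpower lambda alpha ^ n * Rpower lambda alpha.
Proof.
  intros Hl. unfold psi_moment_term, PS_derive. rewrite psi_termE by exact Hl. simpl. ring.
Qed.

Lemma ex_series_psi_moment_term (lambda : R) : 0 < lambda ->
  ex_series (psi_moment_term lambda).
Proof.
  intros Hl. apply ex_series_ext
    with (fun n => PS_derive psi_coef n * Rpower lambda alpha ^ n * Rpower lambda alpha).
  { intros n. symmetry. apply psi_moment_termE, Hl. }
  apply ex_series_scal_r, ex_pseries_R, ex_pseries_derive, Rpower_lt_CV_radius_psi_coef.
Qed.

Definition psi_deriv (lambda : R) : R := alpha * exp (- alpha * lambda) / lambda *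
  (Series (psi_moment_term lambda) - lambda * Series (psi_term lambda)).

Lemma is_derive_psi (lambda : R) : 0 < lambda ->
  is_derive (psi alpha) lambda (psi_deriv lambda).
Proof.
  intros Hl.
  assert (Hpow : is_derive (fun t => Rpower t alpha) lambda
                   (Rpower lambda alpha * (alpha / lambda))).
  { unfold Rpower. auto_derive; [exact Hl | field; lra]. }
  assert (HP := is_derive_comp _ _ lambda _ _
    (is_derive_PSeries _ _ (Rpower_lt_CV_radius_psi_coef lambda)) Hpow).
  assert (He : is_derive (fun t => exp (- alpha * t)) lambda
                 (- alpha * exp (- alpha * lambda))).
  { auto_derive; [exact I | ring]. }
  assert (Hpsi := is_derive_mult _ _ lambda _ _ He HP (fun _ _ => Rmult_comm _ _)).
  apply is_derive_ext_loc with (fun t => exp (- alpha * t) * PSeries psi_coef (Rpower t alpha)).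
  { exists (mkposreal lambda Hl). intros t Ht. apply Rabs_lt_between' in Ht. simpl in Ht.
    unfold psi. f_equal. apply Series_ext. intros n. symmetry. apply psi_termE. lra. }
  assert (ES : PSeries psi_coef (Rpower lambda alpha) = Series (psi_term lambda)).
  { apply Series_ext. intros n. symmetry. apply psi_termE, Hl. }
  assert (EM : PSeries (PS_derive psi_coef) (Rpower lambda alpha) * Rpower lambda alpha
               = Series (psi_moment_term lambda)).
  { unfold PSeries. rewrite <- Series_scal_r. apply Series_ext. intros n.
    symmetry. apply psi_moment_termE, Hl. }
  evar (d : R). replace (psi_deriv lambda) with d; [exact Hpsi | unfold d].
  unfold psi_deriv, plus, mult, scal; simpl; unfold mult; simpl.
  rewrite <- ES, <- EM. field. lra.
Qed.

Definition psi_defect (lambda : R) (n : nat) : R :=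
  alpha * psi_moment_term lambda n + lambda * (1 - alpha) * psi_term lambda (S n)
  - lambda * psi_term lambda n.

Lemma psi_defectE (lambda : R) (n : nat) : 0 < lambda ->
  let r := lambda / INR (S n) in
  psi_defect lambda n = lambda * psi_term lambda n * Rpower r (alpha - 1) *
    (1 + (1 - alpha) * (r - 1) - Rpower r (1 - alpha)).
Proof.
  intros Hl r. pose proof (lt_0_INR (S n) (Nat.lt_0_succ n)).
  assert (Hr : 0 < r) by (apply Rdiv_lt_0_compat; lra).
  assert (HSn : INR (S n) = lambda / r) by (unfold r; field; lra).
  assert (Hsplit : Rpower r alpha = r * Rpower r (alpha - 1)).
  { rewrite <- (Rpower_1 r) at 2 by exact Hr. rewrite <- Rpower_plus. f_equal. ring. }
  assert (Hinv : Rpower r (1 - alpha) = / Rpower r (alpha - 1)).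
  { rewrite <- Rpower_Ropp. f_equal. ring. }
  unfold psi_defect, psi_moment_term. rewrite psi_termS by exact Hl. fold r.
  rewrite Hsplit, HSn, Hinv.
  field. split; [apply Rgt_not_eq, Rpower_pos | lra].
Qed.

Lemma Series_psi_defect (lambda : R) : 0 < lambda ->
  Series (psi_defect lambda)
  = alpha * (Series (psi_moment_term lambda) - lambda * Series (psi_term lambda))
    - lambda * (1 - alpha).
Proof.
  intros Hl.
  assert (HS := ex_series_psi_term lambda Hl).
  assert (HSS : ex_series (fun n => psi_term lambda (S n)))
    by apply (ex_series_incr_1 (psi_term lambda)), HS.
  assert (HM := ex_series_psi_moment_term lambda Hl).
  unfold psi_defect.
  rewrite Series_minus, Series_plus, !Series_scal_l, (Series_psi_term_incr_1 lambda Hl);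
    auto using ex_series_scal_l, ex_series_plus.
  ring.
Qed.

Lemma ex_series_psi_defect (lambda : R) : 0 < lambda -> ex_series (psi_defect lambda).
Proof.
  intros Hl. unfold psi_defect.
  apply (ex_series_minus (V := R_NormedModule));
    [apply (ex_series_plus (V := R_NormedModule)) |];
    apply (ex_series_scal_l (V := R_NormedModule)).
  - apply ex_series_psi_moment_term, Hl.
  - apply (ex_series_incr_1 (psi_term lambda)), ex_series_psi_term, Hl.
  - apply ex_series_psi_term, Hl.
Qed.

Lemma psi_defect_factor_pos (lambda : R) (n : nat) : 0 < lambda ->
  0 < lambda * psi_term lambda n * Rpower (lambda / INR (S n)) (alpha - 1).
Proof.
  intros Hl. repeat apply Rmult_lt_0_compat; [exact Hl | apply Rpower_pos | apply Rpower_pos].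
Qed.

Lemma psi_defect_ge0 (lambda : R) (n : nat) : alpha < 1 -> 0 < lambda ->
  0 <= psi_defect lambda n.
Proof.
  intros Ha Hl. pose proof (lt_0_INR (S n) (Nat.lt_0_succ n)).
  rewrite psi_defectE by exact Hl. cbv zeta.
  apply Rmult_le_pos; [left; apply psi_defect_factor_pos, Hl |].
  enough (Rpower (lambda / INR (S n)) (1 - alpha) <= 1 + (1 - alpha) * (lambda / INR (S n) - 1))
    by lra.
  apply Rpower_le_Bernoulli; [apply Rdiv_lt_0_compat |]; lra.
Qed.

Lemma psi_defect_le0 (lambda : R) (n : nat) : 1 < alpha -> 0 < lambda ->
  psi_defect lambda n <= 0.
Proof.
  intros Ha Hl. pose proof (lt_0_INR (S n) (Nat.lt_0_succ n)).
  rewrite psi_defectE by exact Hl. cbv zeta.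
  pose proof (psi_defect_factor_pos lambda n Hl).
  enough (1 + (1 - alpha) * (lambda / INR (S n) - 1) <= Rpower (lambda / INR (S n)) (1 - alpha))
    by nra.
  apply Rpower_ge_Bernoulli; [apply Rdiv_lt_0_compat |]; lra.
Qed.

Lemma psi_moment_gt (lambda : R) : alpha < 1 -> 0 < lambda ->
  lambda * Series (psi_term lambda) < Series (psi_moment_term lambda).
Proof.
  intros Ha Hl.
  assert (Hd : 0 <= Series (psi_defect lambda)).
  { apply Series_nonneg; [intros n; apply psi_defect_ge0 | apply ex_series_psi_defect]; auto. }
  rewrite Series_psi_defect in Hd by exact Hl. nra.
Qed.

Lemma psi_moment_lt (lambda : R) : 1 < alpha -> 0 < lambda ->
  Series (psi_moment_term lambda) < lambda * Series (psi_term lambda).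
Proof.
  intros Ha Hl.
  assert (Hd : 0 <= Series (fun n => - psi_defect lambda n)).
  { apply Series_nonneg.
    - intros n. pose proof (psi_defect_le0 lambda n Ha Hl). lra.
    - apply (ex_series_opp (V := R_NormedModule)), ex_series_psi_defect, Hl. }
  rewrite Series_opp, Series_psi_defect in Hd by exact Hl. nra.
Qed.

Lemma psi_deriv_factor_pos (lambda : R) : 0 < lambda ->
  0 < alpha * exp (- alpha * lambda) / lambda.
Proof.
  intros Hl. apply Rdiv_lt_0_compat; [| exact Hl].
  apply Rmult_lt_0_compat; [exact alpha_pos | apply exp_pos].
Qed.

Lemma psi_increasing : alpha < 1 -> strictly_increasing_pos (psi alpha).
Proof.
  intros Ha x y Hx Hxy.
  apply (incr_function (psi alpha) 0 p_infty psi_deriv); try easy; simpl.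
  - intros l Hl _. apply is_derive_psi, Hl.
  - intros l Hl _. unfold psi_deriv.
    pose proof (psi_deriv_factor_pos l Hl). pose proof (psi_moment_gt l Ha Hl). nra.
Qed.

Lemma psi_decreasing : 1 < alpha -> strictly_decreasing_pos (psi alpha).
Proof.
  intros Ha x y Hx Hxy. apply Ropp_lt_cancel.
  apply (incr_function (fun l => - psi alpha l) 0 p_infty (fun l => - psi_deriv l));
    try easy; simpl.
  - intros l Hl _. apply (is_derive_opp (psi alpha)), is_derive_psi, Hl.
  - intros l Hl _. unfold psi_deriv.
    pose proof (psi_deriv_factor_pos l Hl). pose proof (psi_moment_lt l Ha Hl). nra.
Qed.

Lemma psi_pos (lambda : R) : 0 < lambda -> 0 < psi alpha lambda.
Proof. intros Hl. apply Rmult_lt_0_compat; [apply exp_pos | apply Series_psi_term_gt0, Hl]. Qed.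

Lemma poisson_renyiE (lambda : R) : 0 < lambda ->
  poisson_renyi alpha lambda = / (1 - alpha) * ln (psi alpha lambda).
Proof.
  intros Hl. unfold poisson_renyi, renyi_entropy, psi. do 2 f_equal.
  rewrite Rmult_comm, <- Series_scal_r. apply Series_ext. intros n.
  unfold poisson_p. rewrite <- Rpower_mult_distr
    by (apply exp_pos || apply Rdiv_lt_0_compat; auto using pow_lt, INR_fact_lt_0).
  unfold Rpower at 2. rewrite ln_exp. do 2 f_equal. ring.
Qed.

Lemma poisson_renyi_increasing : alpha <> 1 ->
  strictly_increasing_pos (poisson_renyi alpha).
Proof.
  intros Hne x y Hx Hxy. rewrite !poisson_renyiE by lra.
  destruct (Rlt_or_le alpha 1) as [Ha | Ha].
  - assert (0 < / (1 - alpha)) by (apply Rinv_0_lt_compat; lra).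
    pose proof (ln_increasing _ _ (psi_pos x Hx) (psi_increasing Ha x y Hx Hxy)). nra.
  - assert (/ (1 - alpha) < 0) by (apply Rinv_lt_0_compat; lra).
    pose proof (ln_increasing _ _ (psi_pos y ltac:(lra)) (psi_decreasing ltac:(lra) x y Hx Hxy)).
    nra.
Qed.
End Psi.

Theorem theorem2 :
  (forall alpha : R, 0 < alpha < 1 ->
     strictly_increasing_pos (fun lambda => psi alpha lambda)) /\
  (forall alpha : R, 1 < alpha ->
     strictly_decreasing_pos (fun lambda => psi alpha lambda)) /\
  (forall alpha : R, 0 < alpha -> alpha <> 1 ->
     strictly_increasing_pos (fun lambda => poisson_renyi alpha lambda)).
Proof.
  split; [| split].
  - intros alpha [Hpos Hlt]. exact (psi_increasing alpha Hpos Hlt).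
  - intros alpha Hgt. exact (psi_decreasing alpha ltac:(lra) Hgt).
  - exact poisson_renyi_increasing.
Qed.
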